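(* Let $G$ be a quiver with $n \geq 1$ vertices, let $\lambda_1 \leq \lambda_2 \leq \cdots \leq \lambda_n$ be the eigenvalues of its Kirchhoff matrix $K$ (listed with multiplicity), and let $d_1 \leq d_2 \leq \cdots \leq d_n$ be its vertex degrees in increasing order, with the convention $d_0 = 0$. Then $\lambda_k \leq d_k + d_{k-1}$ for all $1 \leq k \leq n$.
   Context: A quiver $G=(V,E)$ consists of a finite vertex set $V=\{1,\dots,n\}$ and a finite list (multiset) $E$ of pairs $(v,w)\in V\times V$; repeated edges (multiple connections) and self-loops $(v,v)$ are allowed, and orientation of edges is irrelevant. The adjacency matrix $A$ is the symmetric $n\times n$ matrix with zero diagonal whose entry $A_{ij}$ ($i\neq j$) is the number of entries of $E$ equal to $(i,j)$ or $(j,i)$. The degree $d(i)$ of vertex $i$ is the number of entries $(v,w)$ of $E$ (counted with multiplicity) with $v=i$ or $w=i$; in particular a loop at $i$ contributes $1$ to $d(i)$. $B$ is the diagonal matrix of degrees, and the Kirchhoff matrix is $K=B-A$ (a real symmetric matrix). *)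

From HB Require Import structures.
From mathcomp Require Import all_boot all_order all_algebra.
From mathcomp Require Import reals.
Set Implicit Arguments. Unset Strict Implicit. Unset Printing Implicit Defensive.
Import Order.TTheory GRing.Theory Num.Theory.
Local Open Scope ring_scope.

(* A quiver on vertex set 'I_n is given by a list (multiset) of edges;
   orientation is irrelevant. *)
Definition quiver (n : nat) := seq ('I_n * 'I_n).

Definition adjacency {n : nat} (E : quiver n) (i j : 'I_n) : nat :=
  if i == j then 0%N
  else count (fun e : 'I_n * 'I_n => (e == (i, j)) || (e == (j, i))) E.

(* degree: number of edges (with multiplicity) having i as an endpoint;
   a loop at i contributes 1. *)
Definition degree {n : nat} (E : quiver n) (i : 'I_n) : nat :=
  count (fun e : 'I_n * 'I_n => (e.1 == i) || (e.2 == i)) E.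

Definition kirchhoff (R : realType) {n : nat} (E : quiver n) : 'M[R]_n :=
  \matrix_(i, j) ((i == j)%:R * (degree E i)%:R - (adjacency E i j)%:R).

(* Degrees in increasing order (0-indexed list d_1, ..., d_n). *)
Definition sorted_degrees {n : nat} (E : quiver n) : seq nat :=
  sort leq [seq degree E i | i <- enum 'I_n].

From HB Require Import structures.
From mathcomp Require Import all_boot all_order all_algebra.
From mathcomp Require Import reals complex spectral sesquilinear.
From mathcomp Require Import ring zify.
Import Order.TTheory GRing.Theory Num.Theory.

Set Implicit Arguments.
Unset Strict Implicit.
Unset Printing Implicit Defensive.

Local Open Scope ring_scope.

(* Let M = d_k + d_(k-1).  The vertices of degree at most d_(k-1), together
   with one vertex of degree d_k, form a set S of at least k vertices in which
   every degree, and every sum of the degrees of two distinct vertices, is at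
   most M.  The Kirchhoff matrix is the sum over the edges e = (u, v) of
   w_e^T w_e with w_e = e_u - e_v (w_e = e_u for a loop), so
   x K x^* = sum_e |x_u - x_v|^2.  The weighted Cauchy-Schwarz inequality
   (a + b)^2 <= (p + q) (a^2/p + b^2/q) with p = d_u, q = d_v bounds each term,
   and summing over the edges gives x K x^* <= M |x|^2 for every x supported
   on S.  By the min-max principle K has at least |S| >= k eigenvalues at
   most M, whence lambda_k <= M. *)

Lemma count_le_nth_sorted (T : Type) (leT : rel T) (x0 : T) (s : seq T) j :
  transitive leT -> reflexive leT -> sorted leT s -> (j < size s)%N ->
  (j.+1 <= count (leT^~ (nth x0 s j)) s)%N.
Proof.
move=> leT_tr leT_refl s_sorted js; set t := nth x0 s j.
rewrite -(cat_take_drop j.+1 s) count_cat.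
suff: all (leT^~ t) (take j.+1 s).
  by rewrite all_count size_takel // => /eqP ->; rewrite leq_addr.
apply/(all_nthP x0) => i; rewrite size_takel // => ij.
by rewrite nth_take //; apply: sorted_leq_nth; rewrite // inE; lia.
Qed.

Lemma nth_le_sorted_count (d : Order.disp_t) (T : orderType d) (x0 : T) (s : seq T) (M : T) k :
  sorted <=%O s -> (k < count (fun x => (x <= M)%O) s)%N -> (nth x0 s k <= M)%O.
Proof.
move=> s_sorted ks; rewrite leNgt; apply/negP => Mk.
have no_small_tail : count (fun x => (x <= M)%O) (drop k s) = 0%N.
  apply/eqP; rewrite -leqn0 leqNgt -has_count; apply/hasPn => x /(nthP x0) [j].
  rewrite size_drop ltn_subRL nth_drop => kjs <-; rewrite -ltNge (lt_le_trans Mk) //.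
  apply: sorted_leq_nth; rewrite ?inE //; first exact: le_trans.
  - exact: leq_ltn_trans (leq_addr j k) kjs.
  - exact: leq_addr.
move: ks; rewrite -(cat_take_drop k s) count_cat no_small_tail addn0.
by have := count_size (fun x => (x <= M)%O) (take k s); rewrite size_take_min; lia.
Qed.

Lemma low_degree_set n (E : quiver n) k : (k < n)%N ->
  let d := sorted_degrees E in
  let M := (nth 0 d k + (if k is k'.+1 then nth 0 d k' else 0))%N in
  exists S : {set 'I_n}, [/\ (k < #|S|)%N,
    (forall v, v \in S -> degree E v <= M)%N &
    (forall u v, u \in S -> v \in S -> u != v -> degree E u + degree E v <= M)%N].
Proof.
move=> kn d M; set t := (if k is k'.+1 then nth 0 d k' else 0)%N.
have d_sorted : sorted leq d := sort_sorted leq_total _.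
have d_size : size d = n by rewrite size_sort size_map size_enum_ord.
have d_perm : perm_eq d [seq degree E i | i <- enum 'I_n] by rewrite perm_sort.
have t_le : (t <= nth 0 d k)%N.
  rewrite /t; case: k kn {M t} => // k kn.
  by apply: sorted_leq_nth; rewrite ?inE ?d_size //; [exact: leq_trans | lia].
have count_t : (k <= count (leq^~ t) d)%N.
  rewrite /t; case: k kn {M t t_le} => // k kn.
  by apply: count_le_nth_sorted; rewrite ?d_size //; [exact: leq_trans | lia].
have [w _ dw] : exists2 w, w \in enum 'I_n & nth 0%N d k = degree E w.
  by apply/mapP; rewrite -(perm_mem d_perm) mem_nth ?d_size.
pose A := [set v | degree E v <= t]%N.
have cardA : #|A| = count (leq^~ t) d.
  rewrite (permP d_perm) count_map enumT cardE /enum_mem size_filter.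
  by apply: eq_count => v; rewrite /= inE.
rewrite /M -/t; clearbody d t.
exists (w |: A); split.
- rewrite cardsU1 cardA; case: (boolP (w \in A)) => [wA|_]; last by rewrite add1n ltnS.
  have dk_le : (nth 0 d k <= t)%N by move: wA; rewrite inE dw.
  apply: leq_trans (count_le_nth_sorted 0%N leq_trans leqnn d_sorted _) _; first by rewrite d_size.
  by apply: sub_count => x /= /leq_trans; apply.
- by move=> v; rewrite !inE => /predU1P [-> | ]; lia.
- by move=> u v; rewrite !inE => /predU1P [-> | uA] /predU1P [-> | vA]; rewrite ?eqxx //; lia.
Qed.

Lemma char_poly_conj (F : fieldType) n (P A : 'M[F]_n) :
  P \in unitmx -> char_poly (invmx P *m A *m P) = char_poly A.
Proof.
move=> Pu; pose Q := map_mx polyC (invmx P); pose Q' := map_mx polyC P.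
have QQ' : Q *m Q' = 1%:M by rewrite -map_mxM mulVmx // map_mx1.
rewrite /char_poly.
have -> : char_poly_mx (invmx P *m A *m P) = Q *m char_poly_mx A *m Q'.
  rewrite /char_poly_mx !map_mxM -/Q -/Q' mulmxBr mulmxBl -mulmxA scalar_mxC mulmxA.
  by rewrite -(mulmxA _ Q) QQ' mulmx1.
by rewrite !det_mulmx mulrAC -det_mulmx QQ' det1 mul1r.
Qed.

Lemma capmx_nonzero (F : fieldType) m1 m2 n (U : 'M[F]_(m1, n)) (V : 'M[F]_(m2, n)) :
  (n < \rank U + \rank V)%N -> exists2 x : 'rV_n, x != 0 & (x <= U)%MS && (x <= V)%MS.
Proof.
move=> rankUV; have /rowV0Pn [x xUV x0] : (U :&: V)%MS != 0.
  rewrite -mxrank_eq0 -lt0n.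
  by have := mxrank_sum_cap U V; have := rank_leq_col (U + V)%MS; lia.
by exists x; rewrite // (submx_trans xUV (capmxSl _ _)) (submx_trans xUV (capmxSr _ _)).
Qed.

Definition rowset (F : Type) n (J : {set 'I_n}) (P : 'M[F]_n) : 'M[F]_(#|J|, n) :=
  rowsub enum_val P.

Section RowSet.
Variables (F : fieldType) (n : nat) (J : {set 'I_n}).

Lemma row_free_rowset1 : row_free (rowset J (1%:M : 'M[F]_n)).
Proof.
apply/row_freeP; exists (rowset J 1%:M)^T; apply/matrixP => i i'; rewrite !mxE.
rewrite (bigD1 (enum_val i)) //= big1 => [|j /negbTE nj]; rewrite !mxE.
  by rewrite eqxx mul1r addr0 (inj_eq enum_val_inj) eq_sym.
by rewrite eq_sym nj mul0r.
Qed.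

Lemma mxrank_rowset (P : 'M[F]_n) : P \in unitmx -> \rank (rowset J P) = #|J|.
Proof.
move=> Pu; rewrite /rowset rowsubE mxrankMfree ?row_free_unit //.
exact/eqP/row_free_rowset1.
Qed.

Lemma sub_rowset (P : 'M[F]_n) (v : 'rV_n) : (v <= rowset J P)%MS ->
  exists2 y : 'rV_n, v = y *m P & forall j, j \notin J -> y 0 j = 0.
Proof.
move=> /submxP [z ->]; exists (z *m rowset J 1%:M); first by rewrite /rowset rowsubE mulmxA.
move=> j jJ; rewrite !mxE big1 // => i _; rewrite !mxE.
suff /negbTE -> : enum_val i != j by rewrite mulr0.
by apply: contraNneq jJ => <-; apply: enum_valP.
Qed.

End RowSet.

Section MinMax.
Variables (C : numClosedFieldType) (n : nat).
Local Open Scope sesquilinear_scope.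

Lemma dotmx_sum m (y : 'rV[C]_m) : (y *m y^t*) 0 0 = \sum_j `|y 0 j| ^+ 2.
Proof. by rewrite mxE; apply: eq_bigr => j _; rewrite !mxE normCK. Qed.

Lemma char_poly_spectral (A : 'M[C]_n) : A \is normalmx ->
  char_poly A = \prod_(i < n) ('X - (spectral_diag A 0 i)%:P).
Proof.
move=> /orthomx_spectralP A_eq; rewrite {1}A_eq char_poly_conj ?spectral_unit //.
rewrite char_poly_trig ?diag_mx_is_trig //.
by apply: eq_bigr => i _; rewrite mxE eqxx mulr1n.
Qed.

Lemma diag_form_sum (D y : 'rV[C]_n) :
  (y *m diag_mx D *m y^t*) 0 0 = \sum_j D 0 j * `|y 0 j| ^+ 2.
Proof.
rewrite mul_mx_diag mxE; apply: eq_bigr => j _.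
by rewrite !mxE normCK mulrCA mulrA.
Qed.

Lemma diag_form_gt (D y : 'rV[C]_n) (M : C) (J : {set 'I_n}) :
  (forall j, j \in J -> M < D 0 j) -> (forall j, j \notin J -> y 0 j = 0) -> y != 0 ->
  M * (y *m y^t*) 0 0 < (y *m diag_mx D *m y^t*) 0 0.
Proof.
move=> DJ yJ y0; rewrite dotmx_sum diag_form_sum -subr_gt0 mulr_sumr -sumrB.
have [j0 yj0] : exists j0, y 0 j0 != 0.
  apply/existsP; apply: contraNT y0 => /existsPn y0'.
  by apply/eqP/rowP => j; rewrite mxE; apply/eqP/negPn/y0'.
have j0J : j0 \in J by apply: contraNT yj0 => /yJ ->.
have term_ge0 j : 0 <= D 0 j * `|y 0 j| ^+ 2 - M * `|y 0 j| ^+ 2.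
  rewrite -mulrBl; case: (boolP (j \in J)) => [jJ|/yJ ->]; last by rewrite normr0 expr0n mulr0.
  by rewrite mulr_ge0 ?exprn_ge0 // subr_ge0 ltW // DJ.
rewrite (bigD1 j0) //= ltr_wpDr ?sumr_ge0 // -mulrBl mulr_gt0 ?subr_gt0 ?DJ //.
by rewrite exprn_gt0 // normr_gt0.
Qed.

Lemma hermitian_rank_le_count (A : 'M[C]_n) (s : seq C) (M : C) m (U : 'M[C]_(m, n)) :
  A \is hermsymmx -> char_poly A = \prod_(x <- s) ('X - x%:P) -> M \is Num.real ->
  (forall x : 'rV_n, (x <= U)%MS -> (x *m A *m x^t*) 0 0 <= M * (x *m x^t*) 0 0) ->
  (\rank U <= count (fun x => (x <= M)%R) s)%N.
Proof.
move=> A_herm charA M_real U_form.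
have A_normal := hermitian_normalmx A_herm.
set P := spectralmx A; set D := spectral_diag A.
have P_unitary : P \is unitarymx := spectral_unitarymx A.
have A_eq : A = P^t* *m diag_mx D *m P.
  by rewrite -invmx_unitary //; apply/orthomx_spectralP.
have D_real j : D 0 j \is Num.real.
  by have /mxOverP := hermitian_spectral_diag_real A_herm; apply.
have s_perm : perm_eq s [seq D 0 j | j <- enum 'I_n].
  by apply: prod_XsubC_eq; rewrite -charA char_poly_spectral // big_map big_enum.
pose J := [set j | M < D 0 j].
have count_J : count (fun x => x <= M) s = #|~: J|.
  rewrite (permP s_perm) count_map enumT cardE /enum_mem size_filter.
  by apply: eq_count => j; rewrite /= !inE real_leNgt.
(* Otherwise U meets the span of the eigenvectors of eigenvalue > M. *)
rewrite count_J leqNgt; apply/negP => rankU.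
have [x x0 /andP [xU xJ]] : exists2 x : 'rV_n, x != 0 & (x <= U)%MS && (x <= rowset J P)%MS.
  apply: capmx_nonzero; rewrite mxrank_rowset ?unitarymx_unit //.
  by rewrite -[n in (n < _)%N]card_ord -(cardsC J) addnC ltn_add2r.
have [y xy yJ] := sub_rowset xJ.
have y0 : y != 0 by apply: contraNneq x0 => y0; rewrite xy y0 mul0mx.
have PPt : P *m P^t* = 1%:M by apply/unitarymxP.
have form_eq : y *m P *m A *m (y *m P)^t* = y *m diag_mx D *m y^t*.
  by rewrite A_eq trmx_mul map_mxM !mulmxA -(mulmxA y P) PPt mulmx1 -(mulmxA _ P) PPt mulmx1.
have norm_eq : y *m P *m (y *m P)^t* = y *m y^t*.
  by rewrite trmx_mul map_mxM mulmxA -(mulmxA y P) PPt mulmx1.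
have := U_form x xU; rewrite xy form_eq norm_eq lt_geF //.
by apply: diag_form_gt yJ y0 => j; rewrite inE.
Qed.

End MinMax.


Lemma natr_count (R : pzSemiRingType) (T : Type) (a : pred T) (s : seq T) :
  (count a s)%:R = \sum_(x <- s) (a x)%:R :> R.
Proof.
by rewrite -sum1_count natr_sum big_mkcond; apply: eq_bigr => x _; case: (a x).
Qed.

Lemma sumr_indicator (R : pzSemiRingType) (I : finType) (u : I) (F : I -> R) :
  \sum_i (u == i)%:R * F i = F u.
Proof.
rewrite (bigD1 u) //= eqxx mul1r big1 ?addr0 // => i.
by rewrite eq_sym => /negbTE ->; rewrite mul0r.
Qed.

Lemma sqrD_le_weighted (F : numFieldType) (a b p q : F) :
  0 <= a -> 0 <= b -> 0 < p -> 0 < q ->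
  (a + b) ^+ 2 <= (p + q) * (a ^+ 2 / p + b ^+ 2 / q).
Proof.
move=> a0 b0 p0 q0.
have -> : (p + q) * (a ^+ 2 / p + b ^+ 2 / q) = (a + b) ^+ 2 + (a * q - b * p) ^+ 2 / (p * q).
  by field; rewrite !gt_eqF.
have abpq_real : a * q - b * p \is Num.real.
  by rewrite rpredB ?rpredM // ger0_real // ltW.
rewrite lerDl divr_ge0 //; first by rewrite -real_normK // exprn_ge0.
by rewrite mulr_ge0 // ltW.
Qed.

Section EdgeVectors.
Variables (F : comPzRingType) (n : nat).

(* e_u - e_v for an edge (u, v), and e_u for a loop at u: a loop adds 1 to
   the degree of u and nothing to the adjacency matrix. *)
Definition edge_vec (e : 'I_n * 'I_n) : 'rV[F]_n :=
  \row_i ((e.1 == i)%:R - (e.1 != e.2)%:R * (e.2 == i)%:R).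

Lemma edge_vec_mul e i j : edge_vec e ord0 i * edge_vec e ord0 j =
  (i == j)%:R * ((e.1 == i) || (e.2 == i))%:R
  - ((i != j) && ((e == (i, j)) || (e == (j, i))))%:R.
Proof.
case: e => u v; rewrite !mxE /= !xpair_eqE.
by do ![case: eqP => [?|?]; subst => //=]; ring.
Qed.

Definition laplacian (E : quiver n) : 'M[F]_n :=
  \sum_(e <- E) (edge_vec e)^T *m edge_vec e.

Lemma laplacianE E i j :
  laplacian E i j = (i == j)%:R * (degree E i)%:R - (adjacency E i j)%:R.
Proof.
rewrite summxE; under eq_bigr do rewrite mxE big_ord1 mxE edge_vec_mul.
rewrite sumrB -mulr_sumr /degree /adjacency !natr_count.
by case: eqVneq => [->|_] /=; rewrite ?natr_count ?big1_eq.
Qed.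

Lemma trmx_laplacian E : (laplacian E)^T = laplacian E.
Proof.
apply/matrixP => i j; rewrite mxE !summxE; apply: eq_bigr => e _.
by rewrite !mxE !big_ord1 !mxE mulrC.
Qed.

Lemma edge_vec_dot (x : 'rV[F]_n) e :
  (x *m (edge_vec e)^T) 0 0 = x 0 e.1 - (e.1 != e.2)%:R * x 0 e.2.
Proof.
rewrite mxE; under eq_bigr do rewrite !mxE mulrC mulrBl -mulrA.
by rewrite sumrB -mulr_sumr !sumr_indicator.
Qed.

Lemma sum_incident (c : 'I_n -> F) (u v : 'I_n) :
  \sum_i ((u == i) || (v == i))%:R * c i = c u + (u != v)%:R * c v.
Proof.
have [<-|uv] := eqVneq u v; first by under eq_bigr do rewrite orbb; rewrite sumr_indicator mul0r addr0.
rewrite mul1r -(sumr_indicator u c) -(sumr_indicator v c) -big_split /=.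
apply: eq_bigr => i _; have [<-|_] := eqVneq u i; last by rewrite mul0r add0r.
by rewrite (eq_sym v) (negbTE uv) mul0r addr0.
Qed.

Lemma sum_edges_incident (E : quiver n) (c : 'I_n -> F) :
  \sum_(e <- E) (c e.1 + (e.1 != e.2)%:R * c e.2) = \sum_i (degree E i)%:R * c i.
Proof.
under eq_bigr do rewrite -sum_incident.
rewrite exchange_big /=; apply: eq_bigr => i _.
by rewrite /degree natr_count mulr_suml.
Qed.

End EdgeVectors.

Lemma map_edge_vec (F F' : comPzRingType) (f : {rmorphism F -> F'}) n (e : 'I_n * 'I_n) :
  map_mx f (edge_vec F e) = edge_vec F' e.
Proof. by apply/rowP => i; rewrite !mxE rmorphB rmorphM !rmorph_nat. Qed.

Lemma map_laplacian (F F' : comPzRingType) (f : {rmorphism F -> F'}) n (E : quiver n) :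
  map_mx f (laplacian F E) = laplacian F' E.
Proof. by apply/matrixP => i j; rewrite mxE !laplacianE rmorphB rmorphM !rmorph_nat. Qed.

Lemma map_kirchhoff (R : realType) (F : comPzRingType) (f : {rmorphism R -> F}) n (E : quiver n) :
  map_mx f (kirchhoff R E) = laplacian F E.
Proof. by apply/matrixP => i j; rewrite !mxE laplacianE rmorphB rmorphM !rmorph_nat. Qed.

Section LaplacianForm.
Variables (C : numClosedFieldType) (n : nat) (E : quiver n).
Local Open Scope sesquilinear_scope.

Lemma laplacian_herm : laplacian C E \is hermsymmx.
Proof.
apply/is_hermitianmxP; rewrite expr0 scale1r.
by rewrite trmx_laplacian (map_laplacian Num.conj).
Qed.

Lemma laplacian_form (x : 'rV[C]_n) :
  (x *m laplacian C E *m x^t*) 0 0 = \sum_(e <- E) `|x 0 e.1 - (e.1 != e.2)%:R * x 0 e.2| ^+ 2.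
Proof.
rewrite mulmx_sumr mulmx_suml summxE; apply: eq_bigr => e _.
rewrite !mulmxA -mulmxA.
have -> : edge_vec C e *m x^t* = (x *m (edge_vec C e)^T)^t*.
  by rewrite trmx_mul trmxK map_mxM map_edge_vec.
by rewrite dotmx_sum big_ord1 edge_vec_dot.
Qed.

End LaplacianForm.

Lemma degree_gt0 n (E : quiver n) e i :
  e \in E -> (e.1 == i) || (e.2 == i) -> (0 < degree E i)%N.
Proof. by move=> eE ei; rewrite -has_count; apply/hasP; exists e. Qed.

Section LaplacianBound.
Variables (C : numClosedFieldType) (n : nat) (E : quiver n) (S : {set 'I_n}) (M : nat).
Hypothesis deg_le : forall v, v \in S -> (degree E v <= M)%N.
Hypothesis deg_pair_le :
  forall u v, u \in S -> v \in S -> u != v -> (degree E u + degree E v <= M)%N.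
Variable x : 'rV[C]_n.
Hypothesis x_supp : forall v, v \notin S -> x 0 v = 0.
Local Open Scope sesquilinear_scope.

(* For an isolated vertex the division yields 0, harmlessly: no edge uses it. *)
Let weight i := M%:R * `|x 0 i| ^+ 2 / (degree E i)%:R.

Let weight_ge0 i : 0 <= weight i.
Proof. by rewrite divr_ge0 ?mulr_ge0 ?exprn_ge0. Qed.

Let norm_le_weight i : (0 < degree E i)%N -> `|x 0 i| ^+ 2 <= weight i.
Proof.
move=> di; have [iS|/x_supp ->] := boolP (i \in S); last by rewrite normr0 expr0n.
by rewrite ler_pdivlMr ?ltr0n // mulrC ler_wpM2r ?exprn_ge0 ?ler_nat ?deg_le.
Qed.

Let edge_energy_le e : e \in E ->
  `|x 0 e.1 - (e.1 != e.2)%:R * x 0 e.2| ^+ 2 <= weight e.1 + (e.1 != e.2)%:R * weight e.2.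
Proof.
case: e => u v eE /=.
have du : (0 < degree E u)%N by apply: degree_gt0 eE _; rewrite eqxx.
have dv : (0 < degree E v)%N by apply: degree_gt0 eE _; rewrite eqxx orbT.
have [<-|uv] := eqVneq u v; first by rewrite /= !mul0r subr0 addr0 norm_le_weight.
rewrite /= !mul1r; have [uS|/x_supp ->] := boolP (u \in S); last first.
  by rewrite sub0r normrN (le_trans (norm_le_weight dv)) ?lerDr.
have [vS|/x_supp ->] := boolP (v \in S); last first.
  by rewrite subr0 (le_trans (norm_le_weight du)) ?lerDl.
apply: le_trans (_ : (`|x 0 u| + `|x 0 v|) ^+ 2 <= _).
  by apply: lerXn2r; rewrite ?nnegrE ?addr_ge0 ?ler_normB.
have du' : 0 < (degree E u)%:R :> C by rewrite ltr0n.
have dv' : 0 < (degree E v)%:R :> C by rewrite ltr0n.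
apply: le_trans (sqrD_le_weighted (normr_ge0 _) (normr_ge0 _) du' dv') _.
rewrite -natrD /weight -!mulrA -mulrDr ler_wpM2r ?ler_nat ?deg_pair_le //.
by rewrite addr_ge0 // mulr_ge0 // divr_ge0.
Qed.

Lemma laplacian_form_le : (x *m laplacian C E *m x^t*) 0 0 <= M%:R * (x *m x^t*) 0 0.
Proof.
rewrite laplacian_form dotmx_sum mulr_sumr.
apply: le_trans (_ : \sum_(e <- E) (weight e.1 + (e.1 != e.2)%:R * weight e.2) <= _).
  by rewrite big_seq [X in _ <= X]big_seq; apply: ler_sum => e; apply: edge_energy_le.
rewrite sum_edges_incident; apply: ler_sum => i _.
have [->|d0] := eqVneq (degree E i) 0%N; first by rewrite mul0r mulr_ge0 ?exprn_ge0.
by rewrite /weight mulrC divfK ?pnatr_eq0.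
Qed.

End LaplacianBound.

Lemma kirchhoff_rank_le_count (R : realType) n (E : quiver n) (lam : seq R)
    (S : {set 'I_n}) (M : nat) :
  char_poly (kirchhoff R E) = \prod_(x <- lam) ('X - x%:P) ->
  (forall v, v \in S -> degree E v <= M)%N ->
  (forall u v, u \in S -> v \in S -> u != v -> degree E u + degree E v <= M)%N ->
  (#|S| <= count (fun x => (x <= M%:R)%R) lam)%N.
Proof.
move=> charK degS pairS; pose toC := real_complex R.
have -> : count (fun x => x <= M%:R) lam = count (fun z => z <= M%:R) (map toC lam).
  by rewrite count_map; apply: eq_count => x /=; rewrite -(rmorph_nat toC) lecR.
rewrite -(mxrank_rowset S (unitmx1 R[i] n)).
apply: (hermitian_rank_le_count (laplacian_herm _ E)).
- rewrite -[laplacian _ _](map_kirchhoff toC) -map_char_poly charK rmorph_prod big_map.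
  by apply: eq_bigr => x _; apply: map_polyXsubC.
- exact: realn.
- move=> x /sub_rowset [y ->]; rewrite mulmx1 => y_supp.
  by have := laplacian_form_le degS pairS y_supp; apply.
Qed.

Theorem theorem1 (R : realType) (n : nat) (E : quiver n) (hn : (0 < n)%N)
  (lam : seq R)
  (hsort : sorted <=%R lam)
  (hchar : char_poly (kirchhoff R E) = \prod_(x <- lam) ('X - x%:P)) :
  forall k : nat, (k < n)%N ->
    lam`_k <= ((nth 0%N (sorted_degrees E) k)
               + (if k is k'.+1 then nth 0%N (sorted_degrees E) k' else 0%N))%:R.
Proof.
move=> k kn; have [S [cardS degS pairS]] := low_degree_set E kn.
apply: nth_le_sorted_count hsort _.
exact: leq_trans cardS (kirchhoff_rank_le_count hchar degS pairS).
Qed.
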